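(* Let $\mathcal{Y}$ be a $\mathbb{Z}[X_1^{\pm1},\dots,X_n^{\pm1}]$-module and $\mathcal{G}=\{(y_1,a_1),\dots,(y_K,a_K)\}\subseteq\mathcal{Y}\rtimes\mathbb{Z}^n$. The semigroup $\langle\mathcal{G}\rangle$ is a group if and only if there exists a full-image Eulerian $\mathcal{G}$-graph that represents the neutral element $(0,0)$.
   Context: $\mathcal{Y}\rtimes\mathbb{Z}^n$ is the group of pairs $(y,a)$ with $(y,a)(y',a')=(y+X^a y',a+a')$, $X^a=X_1^{a_1}\cdots X_n^{a_n}$. A $\mathcal{G}$-graph is a finite directed multigraph $\Gamma$ whose vertex set is a finite subset of $\mathbb{Z}^n$, each vertex incident to at least one edge, each edge $e$ carries a label $\ell(e)\in\{1,\dots,K\}$, and an edge with label $i$ from $s(e)$ to $d(e)$ satisfies $d(e)=s(e)+a_i$. $\Gamma$ represents the element $\left(\sum_{e\in E(\Gamma)}X^{s(e)}\cdot y_{\ell(e)},\ \sum_{e\in E(\Gamma)}a_{\ell(e)}\right)$. $\Gamma$ is full-image if every label $1,\dots,K$ occurs on some edge, and Eulerian if it has an Euler circuit (equivalently, it is connected and every vertex has equal in- and out-degree). *)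

From HB Require Import structures.
From mathcomp Require Import all_boot all_order all_algebra.
Set Implicit Arguments. Unset Strict Implicit. Unset Printing Implicit Defensive.
Import GRing.Theory Num.Theory.
Local Open Scope ring_scope.

(* A Z[X_1^{+-1},...,X_n^{+-1}]-module is encoded as an abelian group Y
   (zmodType) together with n pairwise commuting additive automorphisms
   X i : Y -> Y with inverses Xinv i (the action of X_i and X_i^{-1}). *)

Definition powz (Y : Type) (f g : Y -> Y) (z : int) : Y -> Y :=
  match z with
  | Posz k => iter k f
  | Negz k => iter k.+1 g
  end.

Definition Xpow (Y : Type) (n : nat) (X Xinv : 'I_n -> Y -> Y)
  (a : 'rV[int]_n) : Y -> Y :=
  foldr (fun i h => powz (X i) (Xinv i) (a ord0 i) \o h) id (enum 'I_n).

Definition sdmul (Y : zmodType) (n : nat) (X Xinv : 'I_n -> Y -> Y)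
  (g h : Y * 'rV[int]_n) : Y * 'rV[int]_n :=
  (g.1 + Xpow X Xinv g.2 h.1, g.2 + h.2).

Inductive in_sgrp (Y : zmodType) (n K : nat) (X Xinv : 'I_n -> Y -> Y)
  (gens : 'I_K -> Y * 'rV[int]_n) : Y * 'rV[int]_n -> Prop :=
  | sgrp_gen : forall i, in_sgrp X Xinv gens (gens i)
  | sgrp_mul : forall g h, in_sgrp X Xinv gens g -> in_sgrp X Xinv gens h ->
                in_sgrp X Xinv gens (sdmul X Xinv g h).

Definition sgrp_is_group (Y : zmodType) (n K : nat) (X Xinv : 'I_n -> Y -> Y)
  (gens : 'I_K -> Y * 'rV[int]_n) : Prop :=
  in_sgrp X Xinv gens (0, 0) /\
  forall g, in_sgrp X Xinv gens g ->
    exists h, [/\ in_sgrp X Xinv gens h,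
                  sdmul X Xinv g h = (0, 0) & sdmul X Xinv h g = (0, 0)].

(* A G-graph: a finite multiset (seq) of edges; an edge is a pair
   (s(e), l(e)) of its source vertex s(e) in Z^n and its label l(e) in 'I_K
   (labels 1..K are represented by 0..K-1). The vertex set is the set of endpoints of edges
   (so each vertex is incident to some edge and it is a finite subset of Z^n). *)
Definition edge_dst (Y : Type) (n K : nat) (gens : 'I_K -> Y * 'rV[int]_n)
  (e : 'rV[int]_n * 'I_K) : 'rV[int]_n := e.1 + (gens e.2).2.

Definition graph_elt (Y : zmodType) (n K : nat) (X Xinv : 'I_n -> Y -> Y)
  (gens : 'I_K -> Y * 'rV[int]_n) (E : seq ('rV[int]_n * 'I_K))
  : Y * 'rV[int]_n :=
  (\sum_(e <- E) Xpow X Xinv e.1 (gens e.2).1, \sum_(e <- E) (gens e.2).2).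

Definition full_image (n K : nat) (E : seq ('rV[int]_n * 'I_K)) : Prop :=
  forall i : 'I_K, exists s, (s, i) \in E.

Definition eulerian (Y : Type) (n K : nat) (gens : 'I_K -> Y * 'rV[int]_n)
  (E : seq ('rV[int]_n * 'I_K)) : Prop :=
  exists c : seq ('rV[int]_n * 'I_K),
    [/\ perm_eq c E, c != [::] &
        cycle (fun e f => edge_dst gens e == f.1) c].

From HB Require Import structures.
From mathcomp Require Import all_boot all_order all_algebra zify.
Import GRing.Theory Num.Theory.
Local Open Scope ring_scope.

Set Implicit Arguments. Unset Strict Implicit. Unset Printing Implicit Defensive.

(* Reading a word w = i_1 ... i_k in the labels from a vertex s
   traces a G-graph [walk s w] (the edge labelled i_j starts at
   s + a_{i_1} + ... + a_{i_(j-1)}) which represents X^s acting on the product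
   g_{i_1} ... g_{i_k}; conversely every path of edges is the walk of its labels.
   - If <G> is a group, each g_i has an inverse which is a word u_i, and the
     concatenation of all the words i u_i is a word with product (0, 0) using
     every label; its walk from 0 is a closed, hence Eulerian, full-image graph
     representing (0, 0).
   - Conversely, every rotation of an Euler circuit represents the same element
     (0, 0), and rotations are walks; rotating so that an edge labelled i comes
     first and then last shows that g_i r = r g_i = (0, 0) for the word r of the
     remaining labels.  So every generator has an inverse in <G>, hence so does
     every product of generators, and (0, 0) = g_i r lies in <G>. *)

Definition maps_commute (T : Type) (f h : T -> T) : Prop :=
  forall y, f (h y) = h (f y).

Lemma maps_commute_sym (T : Type) (f h : T -> T) :
  maps_commute f h -> maps_commute h f.
Proof. by move=> fh y; rewrite fh. Qed.

Lemma iter_commute (T : Type) (f h : T -> T) k :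
  maps_commute f h -> maps_commute (iter k f) h.
Proof. by move=> fh; elim: k => // k IH y /=; rewrite IH fh. Qed.

Lemma iter_additive (Y : zmodType) (f : Y -> Y) k :
  {morph f : x y / x + y} -> {morph iter k f : x y / x + y}.
Proof. by move=> f_add; elim: k => // k IH x y; rewrite !iterS IH f_add. Qed.

Section IntegerPowers.
Variables (T : Type) (f g : T -> T).
Hypotheses (fK : cancel f g) (gK : cancel g f).
Local Notation pow := (powz f g).

Lemma powz_commute h z :
  maps_commute f h -> maps_commute g h -> maps_commute (pow z) h.
Proof. by move=> fh gh; case: z => k; apply: iter_commute. Qed.

Lemma powzS z y : pow (z + 1) y = f (pow z y).
Proof.
case: z => [m|[|m]].
- by have -> : Posz m + 1 = Posz m.+1 by lia.
- have -> : Negz 0 + 1 = 0 by lia.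
  by rewrite /= gK.
- have -> : Negz m.+1 + 1 = Negz m by lia.
  by rewrite /= gK.
Qed.

Lemma powzB1 z y : pow (z - 1) y = g (pow z y).
Proof.
case: z => [[|m]|m].
- by have -> : Posz 0 - 1 = Negz 0 by lia.
- have -> : Posz m.+1 - 1 = Posz m by lia.
  by rewrite /= fK.
- by have -> : Negz m - 1 = Negz m.+1 by lia.
Qed.

Lemma powzD z w y : pow (z + w) y = pow z (pow w y).
Proof.
have fg : maps_commute f g by move=> x; rewrite gK fK.
have f_pow : maps_commute f (pow z).
  by apply/maps_commute_sym/powz_commute; last exact: maps_commute_sym.
have g_pow : maps_commute g (pow z) by apply/maps_commute_sym/powz_commute.
elim/int_rect: w y => [|k IH|k IH] y; first by rewrite addr0.
- have -> : Posz k.+1 = k%:Z + 1 by lia.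
  by rewrite addrA !powzS IH f_pow.
- have -> : - (k.+1%:Z) = - k%:Z - 1 by lia.
  by rewrite addrA !powzB1 IH g_pow.
Qed.

End IntegerPowers.

Lemma powz_additive (Y : zmodType) (p q : Y -> Y) z :
  {morph p : x y / x + y} -> cancel p q -> cancel q p ->
  {morph powz p q z : x y / x + y}.
Proof.
move=> p_add pK qK; have q_add : {morph q : x y / x + y}.
  by move=> x y; apply: (can_inj pK); rewrite p_add !qK.
by case: z => k; apply: iter_additive.
Qed.

Section ModuleAction.
Variables (Y : zmodType) (n K : nat) (X Xinv : 'I_n -> Y -> Y).
Hypothesis X_additive : forall i (x y : Y), X i (x + y) = X i x + X i y.
Hypothesis X_cancel : forall i, cancel (X i) (Xinv i).
Hypothesis Xinv_cancel : forall i, cancel (Xinv i) (X i).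
Hypothesis X_comm : forall i j (x : Y), X i (X j x) = X j (X i x).

Local Notation Xz i := (powz (X i) (Xinv i)).
Local Notation XP := (Xpow X Xinv).

Lemma X_Xinv_commute i j : maps_commute (X i) (Xinv j).
Proof. by move=> y; apply: (can_inj (X_cancel j)); rewrite X_comm !Xinv_cancel. Qed.

Lemma Xinv_commute i j : maps_commute (Xinv i) (Xinv j).
Proof.
move=> y; apply: (can_inj (X_cancel i)).
by rewrite Xinv_cancel X_Xinv_commute Xinv_cancel.
Qed.

Lemma Xz_commute i j z w : maps_commute (Xz i z) (Xz j w).
Proof.
apply: powz_commute; apply/maps_commute_sym; apply: powz_commute;
  apply/maps_commute_sym.
- exact: X_comm.
- exact: X_Xinv_commute.
- exact/maps_commute_sym/X_Xinv_commute.
- exact: Xinv_commute.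
Qed.

(* [Xprod L a] composes the factors X_i^(a_i) for i in L, so that X^a is
   [Xprod (enum 'I_n) a]; its laws are proved by induction on L. *)
Definition Xprod (L : seq 'I_n) (a : 'rV[int]_n) : Y -> Y :=
  foldr (fun i h => Xz i (a ord0 i) \o h) id L.

Lemma Xprod_commute L a j w : maps_commute (Xz j w) (Xprod L a).
Proof. by elim: L => // i L IH y /=; rewrite -IH Xz_commute. Qed.

Lemma XprodD L a b y : Xprod L (a + b) y = Xprod L a (Xprod L b y).
Proof.
elim: L y => //= i L IH y.
by rewrite mxE powzD // IH Xprod_commute.
Qed.

Lemma Xprod_additive L a : {morph Xprod L a : x y / x + y}.
Proof. by elim: L => // i L IH x y; rewrite /= IH powz_additive. Qed.

Lemma Xprod0 L y : Xprod L 0 y = y.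
Proof. by elim: L => //= i L IH; rewrite mxE IH. Qed.

Lemma XpowD a b y : XP (a + b) y = XP a (XP b y).
Proof. exact: XprodD. Qed.

Lemma Xpow_additive a : {morph XP a : x y / x + y}.
Proof. exact: Xprod_additive. Qed.

Lemma Xpow0 y : XP 0 y = y.
Proof. exact: Xprod0. Qed.

Lemma Xpow_zero a : XP a 0 = 0.
Proof. by apply: (addrI (XP a 0)); rewrite -Xpow_additive !addr0. Qed.

Lemma XpowNK a : cancel (XP a) (XP (- a)).
Proof. by move=> y; rewrite -XpowD addNr Xpow0. Qed.

Local Notation mul := (sdmul X Xinv).

Lemma sdmulA g h k : mul (mul g h) k = mul g (mul h k).
Proof. by rewrite /sdmul /= Xpow_additive XpowD !addrA. Qed.

Lemma sdmul0g g : mul (0, 0) g = g.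
Proof. by case: g => y a; rewrite /sdmul /= Xpow0 !add0r. Qed.

Lemma sdmulg0 g : mul g (0, 0) = g.
Proof. by case: g => y a; rewrite /sdmul /= Xpow_zero !addr0. Qed.

Variable gens : 'I_K -> Y * 'rV[int]_n.

Local Notation in_G := (in_sgrp X Xinv gens).
Local Notation graph := (seq ('rV[int]_n * 'I_K)).
Local Notation value := (graph_elt X Xinv gens).

Definition word_elt (w : seq 'I_K) : Y * 'rV[int]_n :=
  foldr (fun i g => mul (gens i) g) (0, 0) w.

Lemma word_elt_cat w1 w2 : word_elt (w1 ++ w2) = mul (word_elt w1) (word_elt w2).
Proof.
elim: w1 => [|i w1 IH] /=; first by rewrite sdmul0g.
by rewrite IH sdmulA.
Qed.

Lemma word_elt1 i : word_elt [:: i] = gens i.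
Proof. by rewrite /= sdmulg0. Qed.

Lemma sgrp_word_elt w : w != [::] -> in_G (word_elt w).
Proof.
elim: w => [//|i [|j w] IH] _; first by rewrite word_elt1; exact: sgrp_gen.
by apply: sgrp_mul; [exact: sgrp_gen | exact: IH].
Qed.

Lemma sgrp_word g : in_G g -> exists2 w, w != [::] & word_elt w = g.
Proof.
elim=> [i | g1 g2 _ [w1 w1n <-] _ [w2 _ <-]]; first by exists [:: i]; rewrite ?word_elt1.
by exists (w1 ++ w2); [case: w1 w1n | rewrite word_elt_cat].
Qed.

Fixpoint walk (s : 'rV[int]_n) (w : seq 'I_K) : graph :=
  if w is i :: w' then (s, i) :: walk (s + (gens i).2) w' else [::].

Lemma value_walk s w : value (walk s w) = (XP s (word_elt w).1, (word_elt w).2).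
Proof.
elim: w s => [|i w IH] s; first by rewrite /graph_elt /= !big_nil Xpow_zero.
move: (IH (s + (gens i).2)); rewrite /graph_elt /= !big_cons => -[-> ->].
by rewrite /= Xpow_additive XpowD.
Qed.

Lemma mem_walk s w i : i \in w -> exists s', (s', i) \in walk s w.
Proof.
elim: w s => [//|j w IH] s.
rewrite inE => /predU1P [->|/(IH (s + (gens j).2))[s' ws']].
  by exists s; rewrite mem_head.
by exists s'; rewrite inE ws' orbT.
Qed.

Definition edge_follows (e f : 'rV[int]_n * 'I_K) : bool := edge_dst gens e == f.1.

Lemma walk_path s i w :
  path edge_follows (s, i) (walk (s + (gens i).2) w) &&
  (edge_dst gens (last (s, i) (walk (s + (gens i).2) w))
     == s + (gens i).2 + (word_elt w).2).
Proof.
elim: w s i => [|j w IH] s i /=; first by rewrite addr0.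
have /andP [-> /eqP ->] := IH (s + (gens i).2) j.
by rewrite /edge_follows /edge_dst /= !addrA !eqxx.
Qed.

Lemma walk_cycle s w : (word_elt w).2 = 0 -> cycle edge_follows (walk s w).
Proof.
case: w => [//|i w] /= w0; rewrite rcons_path.
have /andP [-> /eqP last_dst] := walk_path s i w.
by rewrite /edge_follows last_dst /= -addrA w0 addr0.
Qed.

Lemma path_walk x p : path edge_follows x p -> x :: p = walk x.1 (map snd (x :: p)).
Proof.
elim: p x => [|y p IH] [s i] //= /andP [/eqP sy py].
by rewrite /edge_dst /= in sy; rewrite sy (IH _ py).
Qed.

Lemma value_perm E1 E2 : perm_eq E1 E2 -> value E1 = value E2.
Proof. by move=> pE; rewrite /graph_elt (perm_big _ pE) (perm_big _ pE). Qed.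

Lemma value_rot k c : value (rot k c) = value c.
Proof. by apply: value_perm; rewrite perm_rot. Qed.

(* A circuit representing (0, 0) spells a word with product (0, 0): its value
   is X^s applied to that product, and X^s is invertible. *)
Lemma cycle_word_elt c :
  cycle edge_follows c -> value c = (0, 0) -> word_elt (map snd c) = (0, 0).
Proof.
case: c => [//|x p]; rewrite /cycle rcons_path => /andP [/path_walk xp _].
set w := map snd (x :: p) in xp *.
rewrite xp value_walk; case: (word_elt w) => y a [y0 ->].
by rewrite -(XpowNK x.1 y) y0 Xpow_zero.
Qed.

Definition sgrp_inverse (g : Y * 'rV[int]_n) : Prop :=
  exists h, [/\ in_G h, mul g h = (0, 0) & mul h g = (0, 0)].

(* Every label on a circuit representing (0, 0) gives an invertible
   generator: rotate the circuit to start, then end, with that edge. *)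
Lemma circuit_label_invertible c s i :
  cycle edge_follows c -> value c = (0, 0) -> (s, i) \in c ->
  sgrp_inverse (gens i).
Proof.
move=> cyc c0 ci; case/splitPr: ci cyc c0 => c1 c2 cyc c0.
set c' := (s, i) :: c2 ++ c1.
have c'_rot : c' = rot (size c1) (c1 ++ (s, i) :: c2) by rewrite rot_size_cat.
have rot_zero k : word_elt (map snd (rot k c')) = (0, 0).
  apply: cycle_word_elt; first by rewrite rot_cycle c'_rot rot_cycle.
  by rewrite value_rot c'_rot value_rot.
set r := map snd (c2 ++ c1).
have c'_labels : map snd c' = i :: r by [].
move: (rot_zero 0) (rot_zero 1).
rewrite rot0 map_rot c'_labels rot1_cons -cats1 word_elt_cat word_elt1.
move=> right_inv left_inv; have [r0 | r_nonnil] := eqVneq r [::].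
  rewrite r0 /= sdmulg0 in right_inv.
  by exists (gens i); split; [exact: sgrp_gen | rewrite right_inv sdmul0g ..].
by exists (word_elt r); split; [exact: sgrp_word_elt | exact: right_inv | exact: left_inv].
Qed.

Lemma sgrp_group_of_gens (i0 : 'I_K) :
  (forall i, sgrp_inverse (gens i)) -> sgrp_is_group X Xinv gens.
Proof.
move=> gens_inv; split.
  have [h [hG <- _]] := gens_inv i0.
  by apply: sgrp_mul; first exact: sgrp_gen.
move=> g; elim=> [i | g1 g2 _ [h1 [h1G g1h1 h1g1]] _ [h2 [h2G g2h2 h2g2]]].
  exact: gens_inv.
exists (mul h2 h1); split; first exact: sgrp_mul.
- by rewrite sdmulA -(sdmulA g2) g2h2 sdmul0g.
- by rewrite sdmulA -(sdmulA h1) h1g1 sdmul0g.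
Qed.

Lemma eulerian_zero_group E :
  [/\ full_image E, eulerian gens E & value E = (0, 0)] ->
  sgrp_is_group X Xinv gens.
Proof.
move=> [full [c [cE c_nonnil cyc]] E0].
have c0 : value c = (0, 0) by rewrite (value_perm cE).
have [[s0 i0] _] : exists x, x \in c.
  by case: c {cE cyc c0} c_nonnil => // x; exists x; exact: mem_head.
apply: (sgrp_group_of_gens i0) => i; have [s si] := full i.
by apply: (circuit_label_invertible cyc c0 (s := s)); rewrite (perm_mem cE).
Qed.

(* In a group <G>, any list of labels extends to a word with product (0, 0):
   append each label i followed by a word for the inverse of g_i. *)
Lemma group_zero_word : sgrp_is_group X Xinv gens ->
  forall L : seq 'I_K, exists W, word_elt W = (0, 0) /\ {subset L <= W}.
Proof.
move=> [_ inv]; elim=> [|i L [W [W0 LW]]]; first by exists [::].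
have [h [/sgrp_word [u _ <-] gi_u _]] := inv _ (sgrp_gen X Xinv gens i).
exists ((i :: u) ++ W); split; first by rewrite word_elt_cat W0 sdmulg0; exact: gi_u.
move=> x /predU1P [-> | Lx]; first exact: mem_head.
by rewrite mem_cat LW ?orbT.
Qed.

(* The "only if" direction: the walk from 0 of a zero word using all labels. *)
Lemma group_eulerian_zero : sgrp_is_group X Xinv gens ->
  exists E, [/\ full_image E, eulerian gens E & value E = (0, 0)].
Proof.
move=> grp; have [[//|i0 w0] _ _] := sgrp_word grp.1.
have [W [W0 LW]] := group_zero_word grp (enum 'I_K).
have W_all i : i \in W by apply: LW; rewrite mem_enum.
exists (walk 0 W); split.
- by move=> i; apply: mem_walk.
- exists (walk 0 W); split => //; last by apply: walk_cycle; rewrite W0.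
  by case: W {W0 LW} W_all => // /(_ i0).
- by rewrite value_walk W0 Xpow_zero.
Qed.

End ModuleAction.

Theorem mainTheorem3 (Y : zmodType) (n K : nat) (X Xinv : 'I_n -> Y -> Y)
  (X_additive : forall i (x y : Y), X i (x + y) = X i x + X i y)
  (X_cancel : forall i, cancel (X i) (Xinv i))
  (Xinv_cancel : forall i, cancel (Xinv i) (X i))
  (X_comm : forall i j (x : Y), X i (X j x) = X j (X i x))
  (gens : 'I_K -> Y * 'rV[int]_n) :
  sgrp_is_group X Xinv gens <->
  exists E : seq ('rV[int]_n * 'I_K),
    [/\ full_image E, eulerian gens E & graph_elt X Xinv gens E = (0, 0)].
Proof.
split; first exact: group_eulerian_zero.
by case=> E; apply: eulerian_zero_group.
Qed.
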